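(* For any pair $(n,k)\in\mathbb{N}\times\mathbb{N}$: (a) if $(n,k)$ is extremely good, then the greedy algorithm is completely universally optimal on $(n,k)$; (b) if $(n,k)$ is good, then the greedy algorithm is universally optimal on $(n,k)$.
   Context: All graphs are undirected and unweighted. For a graph $G=(V,E)$ and integer $k$, a $k$-spanner of $G$ is a subgraph $H=(V,E')$, $E'\subseteq E$, with $\mathrm{dist}_H(u,v)\le k\cdot\mathrm{dist}_G(u,v)$ for all $u,v\in V$. A minimum $k$-spanner is a $k$-spanner with the fewest edges. Girth = length of a shortest cycle ($+\infty$ if acyclic). The greedy algorithm on input $\langle G,k\rangle$ with total ordering $\sigma$ of $E$ starts from $H=(V,\emptyset)$ and processes edges in order $\sigma$, adding edge $(u,v)$ iff the current $\mathrm{dist}_H(u,v)>k$, and outputs the final $H$. A pair $(n,k)$ is extremely good if for every $n$-vertex graph all of its minimum $k$-spanners have girth at least $k+2$; good if for every $n$-vertex graph at least one of its minimum $k$-spanners has girth at least $k+2$. The greedy algorithm is completely universally optimal on $(n,k)$ if for every $n$-vertex graph $G$, every minimum $k$-spanner of $G$ is output by the greedy algorithm on input $\langle G,k\rangle$ for some edge ordering $\sigma$; it is universally optimal on $(n,k)$ if for every $n$-vertex graph $G$ some minimum $k$-spanner of $G$ is output by the greedy algorithm for some edge ordering $\sigma$. *)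

From mathcomp Require Import all_boot.
Set Implicit Arguments. Unset Strict Implicit. Unset Printing Implicit Defensive.

Section Spanners.
Variable n : nat.
Notation V := 'I_n.
(* An (undirected, simple) graph on V is given by its edge set: a set of
   unordered pairs, each a 2-element subset of V. *)
Definition graph := {set {set V}}.

Definition simple_graph (E : graph) : Prop := forall e, e \in E -> #|e| = 2.

Definition adj (E : graph) : rel V := fun x y => [set x; y] \in E.

Definition walkb (E : graph) (u v : V) (m : nat) : bool :=
  [exists t : m.-tuple V, path (adj E) u t && (last u t == v)].

(* dist_E(u,v) <= m  (false when v is unreachable from u) *)
Definition dist_le (E : graph) (u v : V) (m : nat) : bool :=
  [exists j : 'I_m.+1, walkb E u v j].

Definition is_spanner (k : nat) (G H : graph) : Prop :=
  H \subset G /\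
  forall (u v : V) (d : nat), dist_le G u v d -> dist_le H u v (k * d).

Definition min_spanner (k : nat) (G H : graph) : Prop :=
  is_spanner k G H /\ forall H', is_spanner k G H' -> #|H| <= #|H'|.

(* girth(H) >= g : every cycle (sequence of >= 3 distinct vertices,
   cyclically adjacent) has length >= g; vacuous if H is acyclic *)
Definition girth_ge (H : graph) (g : nat) : Prop :=
  forall p : seq V, uniq p -> 3 <= size p -> cycle (adj H) p -> g <= size p.

Definition far (k : nat) (H : graph) (e : {set V}) : bool :=
  [exists u, exists v, [&& u != v, e == [set u; v] & ~~ dist_le H u v k]].

Definition greedy (k : nat) (sigma : seq {set V}) : graph :=
  foldl (fun H e => if far k H e then e |: H else H) set0 sigma.

Definition edge_ordering (E : graph) (sigma : seq {set V}) : Prop :=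
  perm_eq sigma (enum E).

End Spanners.

Definition extremely_good (n k : nat) : Prop :=
  forall G : graph n, simple_graph G ->
  forall H, min_spanner k G H -> girth_ge H k.+2.

Definition good (n k : nat) : Prop :=
  forall G : graph n, simple_graph G ->
  exists H, min_spanner k G H /\ girth_ge H k.+2.

Definition greedy_completely_universally_optimal (n k : nat) : Prop :=
  forall G : graph n, simple_graph G ->
  forall H, min_spanner k G H ->
  exists sigma, edge_ordering G sigma /\ greedy k sigma = H.

Definition greedy_universally_optimal (n k : nat) : Prop :=
  forall G : graph n, simple_graph G ->
  exists H, min_spanner k G H /\
  exists sigma, edge_ordering G sigma /\ greedy k sigma = H.

From mathcomp Require Import all_boot.
Set Implicit Arguments. Unset Strict Implicit. Unset Printing Implicit Defensive.

(* Let H be a k-spanner of G of girth at least k + 2, and let the greedy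
   algorithm process the edges of H first.  When an edge {u, v} of H is
   processed, the current graph is a subgraph of H without that edge, so a
   u-v walk of length at most k in it would close, with {u, v}, a cycle of
   length at most k + 1 in H: the edge is kept, and greedy rebuilds all of H.
   Every remaining edge of G is already spanned with stretch k by H, so it is
   rejected.  Hence any such H is a greedy output; parts (a) and (b) follow
   by applying this to every, resp. some, minimum spanner of girth >= k + 2. *)

Section GreedySpanner.
Variables (n k : nat).
Implicit Types (G H A : graph n) (s : seq {set 'I_n}).

Definition greedy_from A s : graph n :=
  foldl (fun H e => if far k H e then e |: H else H) A s.

Lemma greedy_fromE s : greedy k s = greedy_from set0 s.
Proof. by []. Qed.

Lemma greedy_from_cons A e s :
  greedy_from A (e :: s) = greedy_from (if far k A e then e |: A else A) s.
Proof. by []. Qed.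

Lemma greedy_from_cat A s1 s2 :
  greedy_from A (s1 ++ s2) = greedy_from (greedy_from A s1) s2.
Proof. exact: foldl_cat. Qed.

Lemma girth_no_short_detour H A (u v : 'I_n) :
  girth_ge H k.+2 -> A \subset H -> [set u; v] \in H -> [set u; v] \notin A ->
  u != v -> ~~ dist_le A u v k.
Proof.
move=> girthH AH uvH uvA neq_uv.
apply/negP => /existsP [j /existsP [t /andP [walk_t /eqP last_t]]].
case: (shortenP walk_t) last_t => p path_p uniq_p sub_p last_p.
have size_p : size p <= k.
  apply: leq_trans (uniq_leq_size (andP uniq_p).2 sub_p) _.
  by rewrite size_tuple -ltnS ltn_ord.
have pathH : path (adj H) u p.
  by apply: sub_path path_p => x y; rewrite /adj => /(subsetP AH).
have cycleH : cycle (adj H) (u :: p).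
  by rewrite /= rcons_path pathH /= last_p /adj setUC.
clear sub_p pathH.
case: p path_p uniq_p last_p size_p cycleH => [|w [|w' q]] path_p uniq_p last_p.
- by move: neq_uv; rewrite /= in last_p; rewrite last_p eqxx.
- by move: path_p; rewrite /= in last_p; rewrite /= last_p /adj (negbTE uvA).
- move=> size_p /(girthH _ uniq_p isT); rewrite /= !ltnS => size_ge.
  by move: (leq_trans size_p size_ge); rewrite ltnn.
Qed.

Lemma far_of_girth H A e :
  simple_graph H -> girth_ge H k.+2 -> A \subset H -> e \in H -> e \notin A ->
  far k A e.
Proof.
move=> simpleH girthH AH eH eA.
have /cards2P [u [v [neq_uv De]]] : #|e| == 2 by rewrite simpleH.
apply/existsP; exists u; apply/existsP; exists v; rewrite neq_uv De eqxx /=.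
by rewrite De in eH eA; apply: girth_no_short_detour girthH AH eH eA neq_uv.
Qed.

Lemma greedy_from_girth H A s :
  simple_graph H -> girth_ge H k.+2 -> uniq s -> {subset s <= H} ->
  A \subset H -> [disjoint s & A] -> greedy_from A s = A :|: [set e in s].
Proof.
move=> simpleH girthH; elim: s A => [|e s IHs] A uniq_es sH AH disj.
  by apply/setP => x; rewrite /greedy_from !inE orbF.
have eH : e \in H by apply: sH; rewrite mem_head.
have [eA disj_s] : e \notin A /\ [disjoint s & A].
  by move: disj; rewrite disjoint_cons => /andP [].
case/andP: uniq_es => e_s uniq_s.
rewrite greedy_from_cons (far_of_girth simpleH girthH AH eH eA) IHs //.
- by apply/setP => x; rewrite !inE orbA (orbC (x == e)).
- by move=> x xs; apply: sH; rewrite inE xs orbT.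
- by rewrite subUset sub1set eH.
- move: disj_s; rewrite !disjoint_has => /hasPn s_notA.
  apply/hasPn => x xs; rewrite !inE negb_or s_notA // andbT.
  by apply: contraNneq e_s => <-.
Qed.

Lemma spanner_not_far G H e : is_spanner k G H -> e \in G -> ~~ far k H e.
Proof.
move=> [_ stretch] eG; apply/negP => /existsP [u /existsP [v /and3P [_ /eqP De]]].
apply/negP/negPn; rewrite -(muln1 k); apply: stretch.
apply/existsP; exists ord_max; apply/existsP; exists [tuple v].
by rewrite /= /adj -De eG eqxx.
Qed.

Lemma greedy_from_spanner G H s :
  is_spanner k G H -> {subset s <= G} -> greedy_from H s = H.
Proof.
move=> spanH; elim: s => [|e s IHs] // sG.
rewrite greedy_from_cons (negbTE (spanner_not_far spanH (sG e (mem_head e s)))).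
by apply: IHs => x xs; apply: sG; rewrite inE xs orbT.
Qed.

Lemma edge_ordering_subgraph_first G H :
  H \subset G -> edge_ordering G (enum H ++ enum (G :\: H)).
Proof.
move=> HG; apply: uniq_perm; rewrite ?enum_uniq //.
  rewrite cat_uniq !enum_uniq /= andbT; apply/hasPn => x.
  by rewrite mem_enum inE mem_enum => /andP [].
move=> x; rewrite mem_cat !mem_enum inE.
by case: (boolP (x \in H)) => //= /(subsetP HG) ->.
Qed.

Lemma greedy_spanner_of_girth G H :
  simple_graph G -> is_spanner k G H -> girth_ge H k.+2 ->
  exists sigma, edge_ordering G sigma /\ greedy k sigma = H.
Proof.
move=> simpleG spanH girthH; have HG := spanH.1.
have simpleH : simple_graph H by move=> e /(subsetP HG) /simpleG.
exists (enum H ++ enum (G :\: H)); split; first exact: edge_ordering_subgraph_first.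
have greedyH : greedy_from set0 (enum H) = H.
  rewrite (greedy_from_girth simpleH girthH) ?enum_uniq ?sub0set //.
  - by apply/setP => e; rewrite !inE mem_enum.
  - by move=> e; rewrite mem_enum.
  - by rewrite disjoint_has; apply/hasPn => e _; rewrite inE.
rewrite greedy_fromE greedy_from_cat greedyH.
by apply: (greedy_from_spanner spanH) => e; rewrite mem_enum inE => /andP [].
Qed.

End GreedySpanner.

Theorem corollary1p5 (n k : nat) :
  (extremely_good n k -> greedy_completely_universally_optimal n k) /\
  (good n k -> greedy_universally_optimal n k).
Proof.
split.
- move=> ext_good G simpleG H minH.
  exact: greedy_spanner_of_girth simpleG minH.1 (ext_good G simpleG H minH).
- move=> is_good G simpleG; have [H [minH girthH]] := is_good G simpleG.
  by exists H; split; last exact: greedy_spanner_of_girth simpleG minH.1 girthH.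
Qed.
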